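(* Let $P$ be a poset, let $\Gamma$ and $\Gamma'$ be standard closure operators on $P$ with $\Gamma'\le\Gamma$, let $L_\Gamma$ and $L_{\Gamma'}$ be the complete lattices of $\Gamma$-closed and $\Gamma'$-closed subsets of $P$ (ordered by inclusion), and let $\eta:P\to L_\Gamma$, $\eta':P\to L_{\Gamma'}$ be the maps $p\mapsto p^\downarrow$. Then there is a unique completely join-preserving map $\phi:L_{\Gamma'}\to L_\Gamma$ with $\phi\circ\eta'=\eta$. Moreover, $L_\Gamma$ is a frame if and only if, for every standard closure operator $\Gamma'\le\Gamma$, the corresponding map $\phi$ preserves finite meets.
   Context: A closure operator on $P$ is a map $\Gamma:\wp(P)\to\wp(P)$ that is extensive, monotone and idempotent; it is standard if $\Gamma(\{p\})=p^\downarrow=\{q\in P:q\le p\}$ for all $p\in P$. A set $S$ is $\Gamma$-closed if $\Gamma(S)=S$. $\Gamma'\le\Gamma$ means $\Gamma'(S)\subseteq\Gamma(S)$ for all $S\subseteq P$. A frame is a complete lattice with $x\wedge\bigvee Y=\bigvee_{y\in Y}(x\wedge y)$. *)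

From Stdlib Require Import Relations List.
Set Implicit Arguments.

Section Defs.
Variable P : Type.

Definition pset := P -> Prop.
Definition incl (A B : pset) : Prop := forall x, A x -> B x.

Definition closure_operator (G : pset -> pset) : Prop :=
  (forall S, incl S (G S)) /\
  (forall S T, incl S T -> incl (G S) (G T)) /\
  (forall S, G (G S) = G S).

Definition downset (le : relation P) (p : P) : pset := fun q => le q p.

Definition standard (le : relation P) (G : pset -> pset) : Prop :=
  closure_operator G /\ forall p, G (fun q => q = p) = downset le p.

Definition cl_le (G' G : pset -> pset) : Prop := forall S, incl (G' S) (G S).

Definition closed (G : pset -> pset) (S : pset) : Prop := G S = S.

Definition Lclosed (G : pset -> pset) : Type := {S : pset | closed G S}.
Definition Lle (G : pset -> pset) (a b : Lclosed G) : Prop :=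
  incl (proj1_sig a) (proj1_sig b).
End Defs.

Definition is_lub {A : Type} (le : A -> A -> Prop) (X : A -> Prop) (s : A) : Prop :=
  (forall x, X x -> le x s) /\ (forall u, (forall x, X x -> le x u) -> le s u).
Definition is_glb {A : Type} (le : A -> A -> Prop) (X : A -> Prop) (m : A) : Prop :=
  (forall x, X x -> le m x) /\ (forall u, (forall x, X x -> le u x) -> le u m).

Definition image {A B : Type} (f : A -> B) (X : A -> Prop) : B -> Prop :=
  fun y => exists x, X x /\ y = f x.

Definition pair_set {A : Type} (x y : A) : A -> Prop := fun z => z = x \/ z = y.

Definition join_preserving {A B : Type} (leA : A -> A -> Prop) (leB : B -> B -> Prop)
  (f : A -> B) : Prop :=
  forall X s, is_lub leA X s -> is_lub leB (image f X) (f s).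

(* preserves finite meets (including the empty meet, i.e. top) *)
Definition preserves_finite_meets {A B : Type} (leA : A -> A -> Prop) (leB : B -> B -> Prop)
  (f : A -> B) : Prop :=
  forall (l : list A) m, is_glb leA (fun x => In x l) m ->
    is_glb leB (image f (fun x => In x l)) (f m).

Definition frame {A : Type} (le : A -> A -> Prop) : Prop :=
  (forall X : A -> Prop, exists s, is_lub le X s) /\
  (forall X : A -> Prop, exists m, is_glb le X m) /\
  (forall (x : A) (Y : A -> Prop) s m,
      is_lub le Y s -> is_glb le (pair_set x s) m ->
      is_lub le (fun z => exists y, Y y /\ is_glb le (pair_set x y) z) m).

(* phi o eta' = eta, where eta, eta' : p |-> p^downarrow *)
Definition commutes_eta {P : Type} (le : relation P) (G' G : pset P -> pset P)
  (phi : Lclosed G' -> Lclosed G) : Prop :=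
  forall (p : P) (x : Lclosed G'),
    proj1_sig x = downset le p -> proj1_sig (phi x) = downset le p.

(* A Gamma'-closed set A is the join in L_Gamma' of the principal down-sets p↓ with p in A,
   so a completely join-preserving phi with phi(p↓) = p↓ must send A to the join of those
   p↓ in L_Gamma, which is Gamma(A); conversely A ↦ Gamma(A) preserves joins because
   Gamma' <= Gamma gives Gamma(Gamma'(S)) = Gamma(S).

   The frame property reduces to one condition on Gamma: Gamma(A ∩ B) = Gamma(A) ∩ Gamma(B)
   for down-sets A, B.  Joins in L_Gamma are Gamma of unions and meets are intersections,
   so this condition yields the frame law, and the frame law applied to principal
   down-sets yields it back.  It makes every extension phi = Gamma preserve finite
   meets, and for Gamma' the down-closure (whose closed sets are all down-sets) meet
   preservation of phi is exactly this condition. *)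

From Stdlib Require Import Relations.
From Stdlib Require List.
From Stdlib Require Import FunctionalExtensionality PropExtensionality ProofIrrelevance.

Lemma set_ext {P : Type} (A B : pset P) : incl A B -> incl B A -> A = B.
Proof.
  intros hAB hBA. apply functional_extensionality; intros x.
  apply propositional_extensionality; split; [apply hAB | apply hBA].
Qed.

Lemma Lclosed_eq {P : Type} {G : pset P -> pset P} (a b : Lclosed G) :
  proj1_sig a = proj1_sig b -> a = b.
Proof.
  destruct a as [A hA], b as [B hB]; simpl; intros ->.
  f_equal; apply proof_irrelevance.
Qed.

Definition is_down {P : Type} (le : relation P) (S : pset P) : Prop :=
  forall p q, S p -> le q p -> S q.

Definition inter {P : Type} (A B : pset P) : pset P := fun q => A q /\ B q.

Definition bigcup {P : Type} {G : pset P -> pset P} (X : Lclosed G -> Prop) : pset P :=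
  fun q => exists x, X x /\ proj1_sig x q.

Definition bigcap {P : Type} {G : pset P -> pset P} (X : Lclosed G -> Prop) : pset P :=
  fun q => forall x, X x -> proj1_sig x q.

Definition downsets_in {P : Type} (le : relation P) {G : pset P -> pset P} (A : pset P) :
  Lclosed G -> Prop :=
  fun x => exists p, A p /\ proj1_sig x = downset le p.

Definition down_closure {P : Type} (le : relation P) (S : pset P) : pset P :=
  fun q => exists p, S p /\ le q p.

(* The reverse inclusion always holds by monotonicity. *)
Definition preserves_down_inter {P : Type} (le : relation P) (G : pset P -> pset P) : Prop :=
  forall A B, is_down le A -> is_down le B -> incl (inter (G A) (G B)) (G (inter A B)).

Section ClosureOperator.
Context {P : Type} {G : pset P -> pset P} (HG : closure_operator G).

Lemma cl_ext S : incl S (G S).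
Proof. apply HG. Qed.

Lemma cl_mono S T : incl S T -> incl (G S) (G T).
Proof. apply HG. Qed.

Lemma cl_idem S : closed G (G S).
Proof. apply HG. Qed.

Lemma cl_least S U : closed G U -> incl S U -> incl (G S) U.
Proof. intros hU hSU. rewrite <- hU. exact (cl_mono _ _ hSU). Qed.

Definition Lcl (S : pset P) : Lclosed G := exist _ (G S) (cl_idem S).

Lemma closed_bigcap (X : Lclosed G -> Prop) : closed G (bigcap X).
Proof.
  apply set_ext; [| apply cl_ext].
  intros q hq x Xx. exact (cl_least _ _ (proj2_sig x) (fun r hr => hr x Xx) q hq).
Qed.

Definition Lbigcap (X : Lclosed G -> Prop) : Lclosed G := exist _ (bigcap X) (closed_bigcap X).

Lemma Lcl_bigcup_is_lub X : is_lub (@Lle P G) X (Lcl (bigcup X)).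
Proof.
  split.
  - intros x Xx q xq. apply cl_ext. exists x; split; assumption.
  - intros u hub. apply (cl_least _ _ (proj2_sig u)).
    intros q [x [Xx xq]]. exact (hub x Xx q xq).
Qed.

Lemma Lbigcap_is_glb X : is_glb (@Lle P G) X (Lbigcap X).
Proof.
  split.
  - intros x Xx q hq. exact (hq x Xx).
  - intros u hlb q uq x Xx. exact (hlb x Xx q uq).
Qed.

Lemma lub_carrier X s : is_lub (@Lle P G) X s -> proj1_sig s = G (bigcup X).
Proof.
  intros hs. destruct (Lcl_bigcup_is_lub X) as [hub hleast].
  apply set_ext; [exact (proj2 hs _ hub) | exact (hleast s (proj1 hs))].
Qed.

Lemma glb_carrier X m : is_glb (@Lle P G) X m -> proj1_sig m = bigcap X.
Proof.
  intros hm. destruct (Lbigcap_is_glb X) as [hlb hgreatest].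
  apply set_ext; [exact (hgreatest m (proj1 hm)) | exact (proj2 hm _ hlb)].
Qed.

Definition cl_map {G' : pset P -> pset P} (A : Lclosed G') : Lclosed G := Lcl (proj1_sig A).

End ClosureOperator.

Lemma cl_map_join_preserving {P : Type} {G' G : pset P -> pset P}
  (HG' : closure_operator G') (HG : closure_operator G) :
  cl_le G' G -> join_preserving (@Lle P G') (@Lle P G) (cl_map HG).
Proof.
  intros hle X s hs. split.
  - intros y [x [Xx ->]]. exact (cl_mono HG _ _ (proj1 hs x Xx)).
  - intros u hub. apply (cl_least HG _ _ (proj2_sig u)).
    rewrite (lub_carrier HG' _ _ hs). intros q G'q.
    apply (cl_least HG (bigcup X) _ (proj2_sig u)); [| exact (hle _ q G'q)].
    intros r [x [Xx xr]].
    apply (hub (cl_map HG x)); [exists x; split; auto | exact (cl_ext HG _ r xr)].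
Qed.

Section StandardClosureOperator.
Context {P : Type} {le : relation P} {G : pset P -> pset P} (HG : standard le G).

Lemma cl_below S p q : S p -> le q p -> G S q.
Proof.
  intros Sp lqp. assert (h : downset le p q) by exact lqp.
  rewrite <- (proj2 HG) in h. revert h. apply (cl_mono (proj1 HG)).
  intros r ->. exact Sp.
Qed.

Lemma closed_is_down S : closed G S -> is_down le S.
Proof. intros hS p q Sp lqp. rewrite <- hS. exact (cl_below S p q Sp lqp). Qed.

Lemma bigcup_is_down (X : Lclosed G -> Prop) : is_down le (bigcup X).
Proof.
  intros p q [x [Xx xp]] lqp. exists x. split; [exact Xx |].
  exact (closed_is_down _ (proj2_sig x) p q xp lqp).
Qed.

Lemma bigcap_is_down (X : Lclosed G -> Prop) : is_down le (bigcap X).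
Proof.
  intros p q hp lqp x Xx. exact (closed_is_down _ (proj2_sig x) p q (hp x Xx) lqp).
Qed.

Lemma downset_closed p : closed G (downset le p).
Proof. unfold closed. rewrite <- (proj2 HG). apply (cl_idem (proj1 HG)). Qed.

Definition Ldownset (p : P) : Lclosed G := exist _ (downset le p) (downset_closed p).

Lemma down_closure_cl_le : cl_le (down_closure le) G.
Proof. intros S q [p [Sp lqp]]. exact (cl_below S p q Sp lqp). Qed.

Lemma cl_map_commutes_eta G' : commutes_eta le (@cl_map P G (proj1 HG) G').
Proof. intros p x hx. simpl. rewrite hx. apply downset_closed. Qed.

Hypothesis le_refl : reflexive P le.

Lemma downsets_in_is_lub B s :
  is_down le B -> proj1_sig s = G B -> is_lub (@Lle P G) (downsets_in le B) s.
Proof.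
  intros hB hs. split.
  - intros x [p [Bp hx]] q xq. rewrite hs. apply (cl_ext (proj1 HG)).
    rewrite hx in xq. exact (hB p q Bp xq).
  - intros u hub. unfold Lle. rewrite hs. apply (cl_least (proj1 HG) _ _ (proj2_sig u)).
    intros q Bq. apply (hub (Ldownset q)); [exists q; split; auto | apply le_refl].
Qed.

End StandardClosureOperator.

Lemma join_preserving_eta_carrier {P : Type} {le : relation P} {G' G : pset P -> pset P}
  (le_refl : reflexive P le) (HG' : standard le G') (HG : closure_operator G)
  (phi : Lclosed G' -> Lclosed G) :
  join_preserving (@Lle P G') (@Lle P G) phi -> commutes_eta le phi ->
  forall A, proj1_sig (phi A) = G (proj1_sig A).
Proof.
  intros hj hc A.
  assert (hA := proj2_sig A : closed G' (proj1_sig A)).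
  assert (A_down := closed_is_down HG' _ hA).
  assert (hlub := hj _ _ (downsets_in_is_lub HG' le_refl _ A A_down (eq_sym hA))).
  rewrite (lub_carrier HG _ _ hlub). f_equal. apply set_ext.
  - intros q [y [[x [[p [Ap hx]] ->]] yq]]. rewrite (hc p x hx) in yq.
    exact (A_down p q Ap yq).
  - intros q Aq. exists (phi (Ldownset HG' q)). split.
    + exists (Ldownset HG' q). split; [exists q; split; auto | reflexivity].
    + rewrite (hc q (Ldownset HG' q) eq_refl). apply le_refl.
Qed.

Section DownClosure.
Context {P : Type} {le : relation P} (le_refl : reflexive P le) (le_trans : transitive P le).

Lemma down_closure_standard : standard le (down_closure le).
Proof.
  split; [split; [| split] |].
  - intros S q Sq. exists q. split; [exact Sq | apply le_refl].
  - intros S T hST q [p [Sp lqp]]. exists p. split; [exact (hST p Sp) | exact lqp].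
  - intros S. apply set_ext.
    + intros q [p [[r [Sr lpr]] lqp]]. exists r. split; [exact Sr | exact (le_trans _ _ _ lqp lpr)].
    + intros q [p [Sp lqp]]. exists q. split; [exists p; split; assumption | apply le_refl].
  - intros p. apply set_ext.
    + intros q [r [-> lqr]]. exact lqr.
    + intros q lqp. exists p. split; [reflexivity | exact lqp].
Qed.

Lemma down_closure_closed S : is_down le S -> closed (down_closure le) S.
Proof.
  intros hS. apply set_ext; [| apply (cl_ext (proj1 down_closure_standard))].
  intros q [p [Sp lqp]]. exact (hS p q Sp lqp).
Qed.

End DownClosure.

Section Frame.
Context {P : Type} {le : relation P} {G : pset P -> pset P} (HG : standard le G).
Hypothesis le_refl : reflexive P le.

Lemma frame_inter_cl_down X B :
  frame (@Lle P G) -> closed G X -> is_down le B -> incl (inter X (G B)) (G (inter X B)).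
Proof.
  intros [_ [_ hdistr]] hX hB q [Xq GBq].
  set (x := exist _ X hX : Lclosed G).
  set (s := Lcl (proj1 HG) B).
  set (m := Lbigcap (proj1 HG) (pair_set x s)).
  assert (hm := hdistr x (downsets_in le B) s m
                  (downsets_in_is_lub HG le_refl B s hB eq_refl)
                  (Lbigcap_is_glb (proj1 HG) _)).
  assert (mq : proj1_sig m q) by (intros w [-> | ->]; assumption).
  rewrite (lub_carrier (proj1 HG) _ _ hm) in mq. revert mq. apply (cl_mono (proj1 HG)).
  intros r [z [[y [[p [Bp hy]] hz]] zr]].
  rewrite (glb_carrier (proj1 HG) _ _ hz) in zr.
  split; [exact (zr x (or_introl eq_refl)) |].
  assert (yr := zr y (or_intror eq_refl)). rewrite hy in yr. exact (hB p r Bp yr).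
Qed.

Lemma frame_preserves_down_inter : frame (@Lle P G) -> preserves_down_inter le G.
Proof.
  intros hF A B hA hB q [GAq GBq].
  assert (hBA := frame_inter_cl_down (G B) A hF (cl_idem (proj1 HG) B) hA q (conj GBq GAq)).
  revert hBA. apply (cl_least (proj1 HG) _ _ (cl_idem (proj1 HG) _)).
  intros r [GBr Ar].
  assert (hr := frame_inter_cl_down _ B hF (downset_closed HG r) hB r (conj (le_refl r) GBr)).
  revert hr. apply (cl_mono (proj1 HG)).
  intros t [ltr Bt]. exact (conj (hA r t Ar ltr) Bt).
Qed.

Lemma preserves_down_inter_frame : preserves_down_inter le G -> frame (@Lle P G).
Proof.
  intros hG. split; [| split].
  - intros X. eexists. apply (Lcl_bigcup_is_lub (proj1 HG)).
  - intros X. eexists. apply (Lbigcap_is_glb (proj1 HG)).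
  - intros x Y s m hs hm. split.
    + intros z [y [Yy hz]]. apply (proj2 hm). intros w [-> | ->].
      * exact (proj1 hz x (or_introl eq_refl)).
      * intros q zq. exact (proj1 hs y Yy q (proj1 hz y (or_intror eq_refl) q zq)).
    + intros u hub. unfold Lle. rewrite (glb_carrier (proj1 HG) _ _ hm).
      intros q hq.
      assert (xq := hq x (or_introl eq_refl)). assert (sq := hq s (or_intror eq_refl)).
      rewrite (lub_carrier (proj1 HG) _ _ hs) in sq.
      destruct x as [X hX]. simpl in xq.
      apply (cl_least (proj1 HG) (inter X (bigcup Y)) _ (proj2_sig u)).
      * intros r [Xr [y [Yy yr]]].
        apply (hub (Lbigcap (proj1 HG) (pair_set (exist _ X hX) y))).
        -- exists y. split; [exact Yy | apply Lbigcap_is_glb].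
        -- intros w [-> | ->]; assumption.
      * apply hG; [exact (closed_is_down HG X hX) | apply bigcup_is_down, HG |].
        split; [rewrite hX; exact xq | exact sq].
Qed.

Lemma cl_bigcap_list {G' : pset P -> pset P} (HG' : standard le G') :
  preserves_down_inter le G -> forall l : list (Lclosed G'),
  incl (fun q => forall x, List.In x l -> G (proj1_sig x) q)
       (G (bigcap (fun x => List.In x l))).
Proof.
  intros hG l. induction l as [| a l IH]; intros q hq.
  - apply (cl_ext (proj1 HG)). intros x [].
  - assert (h : G (inter (proj1_sig a) (bigcap (fun x => List.In x l))) q).
    { apply hG; [exact (closed_is_down HG' _ (proj2_sig a)) | apply bigcap_is_down, HG' |].
      split; [exact (hq a (or_introl eq_refl)) |].
      apply IH. intros x lx. exact (hq x (or_intror lx)). }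
    revert h. apply (cl_mono (proj1 HG)).
    intros r [ar lr] x [<- | lx]; [exact ar | exact (lr x lx)].
Qed.

Lemma preserves_down_inter_finite_meets {G' : pset P -> pset P} (HG' : standard le G')
  (phi : Lclosed G' -> Lclosed G) :
  preserves_down_inter le G ->
  join_preserving (@Lle P G') (@Lle P G) phi -> commutes_eta le phi ->
  preserves_finite_meets (@Lle P G') (@Lle P G) phi.
Proof.
  intros hG hj hc l m hm.
  assert (hphi := join_preserving_eta_carrier le_refl HG' (proj1 HG) phi hj hc).
  split.
  - intros y [x [lx ->]]. unfold Lle. rewrite !hphi.
    exact (cl_mono (proj1 HG) _ _ (proj1 hm x lx)).
  - intros u hu. unfold Lle. rewrite hphi, (glb_carrier (proj1 HG') _ _ hm).
    intros q uq. apply (cl_bigcap_list HG' hG).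
    intros x lx. rewrite <- hphi. exact (hu (phi x) (ex_intro _ x (conj lx eq_refl)) q uq).
Qed.

Hypothesis le_trans : transitive P le.

Lemma finite_meets_preserves_down_inter :
  preserves_finite_meets (@Lle P (down_closure le)) (@Lle P G) (cl_map (proj1 HG)) ->
  preserves_down_inter le G.
Proof.
  intros hmeets A B hA hB q [GAq GBq].
  assert (HD := proj1 (down_closure_standard le_refl le_trans)).
  set (a := exist _ A (down_closure_closed le_refl le_trans A hA) : Lclosed (down_closure le)).
  set (b := exist _ B (down_closure_closed le_refl le_trans B hB) : Lclosed (down_closure le)).
  set (ab := fun x => List.In x (a :: b :: nil)).
  destruct (hmeets _ _ (Lbigcap_is_glb HD ab)) as [_ hgreatest].
  set (u := Lbigcap (proj1 HG) (image (cl_map (proj1 HG)) ab)).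
  assert (hu : Lle u (cl_map (proj1 HG) (Lbigcap HD ab)))
    by exact (hgreatest u (proj1 (Lbigcap_is_glb (proj1 HG) _))).
  assert (hab : incl (bigcap ab) (inter A B)).
  { intros r hr. exact (conj (hr a (or_introl eq_refl)) (hr b (or_intror (or_introl eq_refl)))). }
  apply (cl_mono (proj1 HG) _ _ hab), (hu q).
  intros y [x [[<- | [<- | []]] ->]]; assumption.
Qed.

End Frame.

Theorem proposition2p6 :
  forall (P : Type) (le : relation P), order P le ->
  forall G : pset P -> pset P, standard le G ->
    (forall G' : pset P -> pset P, standard le G' -> cl_le G' G ->
       exists! phi : Lclosed G' -> Lclosed G,
         join_preserving (@Lle P G') (@Lle P G) phi /\ commutes_eta le phi)
    /\
    (frame (@Lle P G) <->
       (forall G' : pset P -> pset P, standard le G' -> cl_le G' G ->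
          forall phi : Lclosed G' -> Lclosed G,
            join_preserving (@Lle P G') (@Lle P G) phi -> commutes_eta le phi ->
            preserves_finite_meets (@Lle P G') (@Lle P G) phi)).
Proof.
  intros P le [le_refl le_trans _] G HG. split; [| split].
  - intros G' HG' hle. exists (cl_map (proj1 HG)). split.
    + exact (conj (cl_map_join_preserving (proj1 HG') (proj1 HG) hle) (cl_map_commutes_eta HG G')).
    + intros phi [hj hc]. apply functional_extensionality. intros A. apply Lclosed_eq.
      symmetry. exact (join_preserving_eta_carrier le_refl HG' (proj1 HG) phi hj hc A).
  - intros hF G' HG' _ phi.
    exact (preserves_down_inter_finite_meets HG le_refl HG' phi
             (frame_preserves_down_inter HG le_refl hF)).
  - intros hmeets. apply (preserves_down_inter_frame HG).
    apply (finite_meets_preserves_down_inter HG le_refl le_trans).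
    pose proof (down_closure_standard le_refl le_trans) as HD.
    apply (hmeets _ HD (down_closure_cl_le HG)).
    + exact (cl_map_join_preserving (proj1 HD) (proj1 HG) (down_closure_cl_le HG)).
    + exact (cl_map_commutes_eta HG _).
Qed.
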